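(* Under the standing setup below, \[ a_{-n-1} \sim \frac{\pi/4}{\arctan u_1}\, D_n \quad \text{as } n \to +\infty . \] In particular, $a_{-n-1} > 0$ for all sufficiently large $n$.
   Context: Standing setup: $a_0, a_1 \in \mathbb{Z}$ and $u_0 > u_1 > 0$ are rational numbers with $a_0 \arctan u_0 + a_1 \arctan u_1 = \pi/4$. Let $\alpha := \arctan u_0 / \arctan u_1$ (which is $>1$ and irrational), with infinite simple continued fraction expansion $\alpha = [q_0; q_1, q_2, \dots]$, $q_i \in \mathbb{N}$. The integers $a_{-n}$ for $n \geq 1$ are defined recursively by $a_{-n-1} := q_n a_{-n} + a_{-n+1}$ for all $n \in \mathbb{N}_0$. The sequences $N_k, D_k$ ($k \ge -2$) are defined by $N_{-2}=0$, $N_{-1}=1$, $D_{-2}=1$, $D_{-1}=0$, and $N_k = q_k N_{k-1} + N_{k-2}$, $D_k = q_k D_{k-1} + D_{k-2}$ for $k \in \mathbb{N}_0$; thus $N_n/D_n = [q_0; q_1, \dots, q_n]$ in lowest terms for $n \ge 0$. *)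

From Stdlib Require Import Reals QArith ZArith.
From Coquelicot Require Import Coquelicot.
Open Scope R_scope.

Fixpoint cf_rem (x : R) (n : nat) : R :=
  match n with
  | O => x
  | S m => / (cf_rem x m - IZR (Int_part (cf_rem x m)))
  end.

Definition cf_q (x : R) (n : nat) : Z := Int_part (cf_rem x n).

(* The sequences N_k, D_k (k >= -2), shifted by 2:
   Nsh x j = N_{j-2}, Dsh x j = D_{j-2}. *)
Fixpoint Nsh (x : R) (j : nat) : Z :=
  match j with
  | O => 0%Z
  | S O => 1%Z
  | S ((S k) as j1) => (cf_q x k * Nsh x j1 + Nsh x k)%Z
  end.

Fixpoint Dsh (x : R) (j : nat) : Z :=
  match j with
  | O => 1%Z
  | S O => 0%Z
  | S ((S k) as j1) => (cf_q x k * Dsh x j1 + Dsh x k)%Z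
  end.

Definition Dn (x : R) (n : nat) : Z := Dsh x (n + 2).

(* The sequence a_{1-j}:  ash x a0 a1 j = a_{1-j}, so ash 0 = a_1, ash 1 = a_0,
   ash (n+2) = q_n * ash (n+1) + ash n,  i.e. a_{-n-1} = q_n a_{-n} + a_{-n+1}. *)
Fixpoint ash (x : R) (a0 a1 : Z) (j : nat) : Z :=
  match j with
  | O => a1
  | S O => a0
  | S ((S k) as j1) => (cf_q x k * ash x a0 a1 j1 + ash x a0 a1 k)%Z
  end.

(* a_{-n-1} for n >= 0 *)
Definition a_neg (x : R) (a0 a1 : Z) (n : nat) : Z := ash x a0 a1 (n + 2).

(* Unfolding the recurrence, a_{-n-1} = a_0 N_n + a_1 D_n, so
   a_{-n-1} / D_n = a_0 (N_n / D_n) + a_1.  The convergents N_n / D_n tend to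
   alpha (their error is at most 1 / (D_n D_{n+1}) and D_n grows at least
   linearly), hence the ratio tends to a_0 alpha + a_1 = (pi/4) / arctan u_1 > 0,
   and a_{-n-1} is eventually positive because D_n > 0. *)

From Stdlib Require Import Reals QArith ZArith Lra Lia.
From Coquelicot Require Import Coquelicot.
Open Scope R_scope.

Lemma is_lim_seq_inv_INR_S : is_lim_seq (fun n => / INR (S n)) 0.
Proof.
  assert (H : is_lim_seq (fun n => / INR n) (Rbar_inv p_infty)).
  { apply is_lim_seq_inv; [apply is_lim_seq_INR | discriminate]. }
  exact (proj1 (is_lim_seq_incr_1 (fun n => / INR n) 0) H).
Qed.

Lemma is_lim_seq_of_dist_le (u v : nat -> R) (l : R) :
  (forall n, Rabs (u n - l) <= v n) -> is_lim_seq v 0 -> is_lim_seq u l.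
Proof.
  intros Hd Hv.
  apply is_lim_seq_le_le with (u := fun n => l - v n) (w := fun n => l + v n).
  - intros n. specialize (Hd n). apply Rabs_le_between' in Hd. lra.
  - replace (Finite l) with (Finite (l - 0)) by (f_equal; ring).
    apply is_lim_seq_minus'; [apply is_lim_seq_const | exact Hv].
  - replace (Finite l) with (Finite (l + 0)) by (f_equal; ring).
    apply is_lim_seq_plus'; [apply is_lim_seq_const | exact Hv].
Qed.

Lemma is_lim_seq_eventually_pos (u : nat -> R) (l : R) :
  is_lim_seq u l -> 0 < l -> exists N, forall n, (N <= n)%nat -> 0 < u n.
Proof.
  intros Hu Hl. apply is_lim_seq_spec in Hu.
  destruct (Hu (mkposreal l Hl)) as [N HN].
  exists N. intros n Hn. specialize (HN n Hn). simpl in HN.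
  apply Rabs_lt_between' in HN. lra.
Qed.

Lemma Nsh_SS x k : Nsh x (S (S k)) = (cf_q x k * Nsh x (S k) + Nsh x k)%Z.
Proof. reflexivity. Qed.

Lemma Dsh_SS x k : Dsh x (S (S k)) = (cf_q x k * Dsh x (S k) + Dsh x k)%Z.
Proof. reflexivity. Qed.

Lemma ash_eq_Nsh_Dsh x a0 a1 j :
  ash x a0 a1 j = (a0 * Nsh x j + a1 * Dsh x j)%Z.
Proof.
  enough (H : ash x a0 a1 j = (a0 * Nsh x j + a1 * Dsh x j)%Z /\
              ash x a0 a1 (S j) = (a0 * Nsh x (S j) + a1 * Dsh x (S j))%Z)
    by apply H.
  induction j as [|j [IH1 IH2]]; [simpl; split; ring|].
  split; [exact IH2|].
  change (ash x a0 a1 (S (S j)))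
    with (cf_q x j * ash x a0 a1 (S j) + ash x a0 a1 j)%Z.
  rewrite Nsh_SS, Dsh_SS, IH1, IH2. ring.
Qed.

Lemma Nsh_Dsh_det x k :
  Z.abs (Nsh x (S k) * Dsh x k - Nsh x k * Dsh x (S k)) = 1%Z.
Proof.
  induction k as [|k IH]; [reflexivity|].
  rewrite Nsh_SS, Dsh_SS, <- IH, <- Z.abs_opp. f_equal. ring.
Qed.

Section Convergents.

Variable x : R.
Hypothesis x_gt1 : 1 < x.
Hypothesis x_irrational : forall N D : Z, (0 < D)%Z -> x <> IZR N / IZR D.

Definition cf_invariant n :=
  1 < cf_rem x n /\ (0 <= Dsh x n)%Z /\ (0 <= Dsh x (S n))%Z /\
  (0 < Dsh x n + Dsh x (S n))%Z /\
  x = (IZR (Nsh x (S n)) * cf_rem x n + IZR (Nsh x n)) /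
      (IZR (Dsh x (S n)) * cf_rem x n + IZR (Dsh x n)).

Lemma cf_q_ge1_of_rem_gt1 n : 1 < cf_rem x n -> (1 <= cf_q x n)%Z.
Proof.
  intros H. unfold cf_q. destruct (base_Int_part (cf_rem x n)) as [A B].
  assert (H0 : (0 < Int_part (cf_rem x n))%Z) by (apply lt_IZR; lra).
  lia.
Qed.

Lemma cf_invariant_all n : cf_invariant n.
Proof.
  induction n as [|n IH].
  { unfold cf_invariant; simpl. repeat split; try lia; try lra. field. }
  pose proof (cf_q_ge1_of_rem_gt1 n (proj1 IH)) as Hq.
  destruct IH as (H1 & D0 & D1 & Ds & Hx).
  set (r := cf_rem x n) in *. set (q := cf_q x n) in *.
  destruct (base_Int_part r) as [A B]. change (Int_part r) with q in A, B.
  set (f := r - IZR q).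
  assert (Hrs : cf_rem x (S n) = / f) by reflexivity.
  (* Irrationality keeps the fractional part nonzero, so [/ f] is not junk. *)
  assert (Hf0 : f <> 0).
  { intro Hf. apply (x_irrational (Nsh x (S n) * q + Nsh x n)
                                  (Dsh x (S n) * q + Dsh x n)); [nia|].
    rewrite !plus_IZR, !mult_IZR.
    replace (IZR q) with r by (unfold f in Hf; lra). exact Hx. }
  assert (Hf : 0 < f < 1) by (unfold f in *; lra).
  assert (Hden : 0 < IZR (Dsh x (S n)) * r + IZR (Dsh x n)).
  { apply IZR_le in D0, D1. apply IZR_lt in Ds. rewrite plus_IZR in Ds. nra. }
  unfold cf_invariant. rewrite Hrs, Nsh_SS, Dsh_SS. fold q.
  repeat split; try nia.
  - rewrite <- Rinv_1. apply Rinv_lt_contravar; lra.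
  - etransitivity; [exact Hx|]. rewrite !plus_IZR, !mult_IZR.
    replace r with (IZR q + f) in Hden |- * by (unfold f; ring).
    field. lra.
Qed.

Lemma cf_q_ge1 n : (1 <= cf_q x n)%Z.
Proof. exact (cf_q_ge1_of_rem_gt1 n (proj1 (cf_invariant_all n))). Qed.

Lemma Dn_ge n : (1 <= Dn x n)%Z /\ (Z.of_nat n <= Dn x n)%Z.
Proof.
  unfold Dn.
  enough (H : (1 <= Dsh x (n+2))%Z /\ (Z.of_nat n <= Dsh x (n+2))%Z /\
              (1 <= Dsh x (n+3))%Z /\ (Z.of_nat (S n) <= Dsh x (n+3))%Z)
    by lia.
  induction n as [|n IH].
  - simpl. pose proof (cf_q_ge1 1). lia.
  - replace (S n + 2)%nat with (n + 3)%nat by lia.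
    replace (S n + 3)%nat with (S (S (n + 2))) by lia.
    rewrite Dsh_SS. replace (S (n + 2)) with (n + 3)%nat by lia.
    pose proof (cf_q_ge1 (n + 2)). nia.
Qed.

Lemma convergent_error n :
  Rabs (IZR (Nsh x (n+2)) / IZR (Dn x n) - x)
  <= / (IZR (Dn x n) * IZR (Dn x (S n))).
Proof.
  destruct (cf_invariant_all (S n)) as (Hr & HD1 & _ & _ & Hx).
  unfold Dn. replace (S n + 2)%nat with (S (S (S n))) by lia.
  rewrite Dsh_SS. replace (S (S n)) with (n + 2)%nat in * by lia.
  set (r := cf_rem x (S n)) in *. set (q := cf_q x (S n)).
  set (N1 := Nsh x (S n)) in *. set (N2 := Nsh x (n+2)) in *.
  set (D1 := Dsh x (S n)) in *. set (D2 := Dsh x (n+2)) in *.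
  assert (HD2 : (1 <= D2)%Z) by apply (Dn_ge n).
  assert (Hqr : IZR q <= r) by apply (base_Int_part r).
  assert (Hdet : Rabs (IZR (N1 * D2 - N2 * D1)) = 1).
  { rewrite Rabs_Zabs, <- Z.abs_opp.
    replace (- (N1 * D2 - N2 * D1))%Z with (N2 * D1 - N1 * D2)%Z by ring.
    unfold N1, N2, D1, D2. replace (n + 2)%nat with (S (S n)) by lia.
    rewrite Nsh_Dsh_det. reflexivity. }
  apply IZR_le in HD1, HD2.
  assert (Hq1 : 1 <= IZR q) by apply IZR_le, cf_q_ge1.
  assert (E : IZR N2 / IZR D2 - x
              = - IZR (N1 * D2 - N2 * D1) / (IZR D2 * (IZR D2 * r + IZR D1))).
  { rewrite Hx, minus_IZR, !mult_IZR. field. nra. }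
  rewrite E, Rabs_div, Rabs_Ropp, Hdet, Rabs_pos_eq by nra.
  rewrite plus_IZR, mult_IZR. unfold Rdiv. rewrite Rmult_1_l.
  apply Rinv_le_contravar; nra.
Qed.

Lemma convergents_cvg :
  is_lim_seq (fun n => IZR (Nsh x (n+2)) / IZR (Dn x n)) x.
Proof.
  apply is_lim_seq_of_dist_le with (v := fun n => / INR (S n));
    [|exact is_lim_seq_inv_INR_S].
  intros n. eapply Rle_trans; [apply convergent_error|].
  destruct (Dn_ge n) as [H1 _]. destruct (Dn_ge (S n)) as [_ H2].
  apply IZR_le in H1, H2. rewrite <- INR_IZR_INZ in H2.
  pose proof (pos_INR (S n)).
  apply Rinv_le_contravar; [apply lt_0_INR; lia | nra].
Qed.

Lemma a_neg_div_Dn_cvg a0 a1 :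
  is_lim_seq (fun n => IZR (a_neg x a0 a1 n) / IZR (Dn x n)) (IZR a0 * x + IZR a1).
Proof.
  apply is_lim_seq_ext
    with (u := fun n => IZR a0 * (IZR (Nsh x (n+2)) / IZR (Dn x n)) + IZR a1).
  { intros n. destruct (Dn_ge n) as [HD _]. apply IZR_le in HD.
    unfold a_neg. rewrite ash_eq_Nsh_Dsh, plus_IZR, !mult_IZR.
    unfold Dn in *. field. lra. }
  apply is_lim_seq_plus'; [|apply is_lim_seq_const].
  exact (is_lim_seq_scal_l _ (IZR a0) x convergents_cvg).
Qed.

Lemma a_neg_eventually_pos a0 a1 :
  0 < IZR a0 * x + IZR a1 ->
  exists N, forall n, (N <= n)%nat -> (0 < a_neg x a0 a1 n)%Z.
Proof.
  intros Hl.
  destruct (is_lim_seq_eventually_pos _ _ (a_neg_div_Dn_cvg a0 a1) Hl) as [N HN].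
  exists N. intros n Hn. specialize (HN n Hn).
  destruct (Dn_ge n) as [HD _]. apply IZR_le in HD.
  apply lt_IZR. replace (IZR (a_neg x a0 a1 n))
    with (IZR (a_neg x a0 a1 n) / IZR (Dn x n) * IZR (Dn x n)) by (field; lra).
  apply Rmult_lt_0_compat; lra.
Qed.

End Convergents.

Theorem corollary1 (a0 a1 : Z) (u0 u1 : Q)
  (Hu1 : 0 < Q2R u1) (Hu01 : Q2R u1 < Q2R u0)
  (Hrel : IZR a0 * atan (Q2R u0) + IZR a1 * atan (Q2R u1) = PI / 4)
  (Hirr : forall r : Q, atan (Q2R u0) / atan (Q2R u1) <> Q2R r) :
  let alpha := atan (Q2R u0) / atan (Q2R u1) in
  is_lim_seq (fun n : nat => IZR (a_neg alpha a0 a1 n) / IZR (Dn alpha n))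
             ((PI / 4) / atan (Q2R u1))
  /\ (exists N : nat, forall n : nat, (N <= n)%nat -> (0 < a_neg alpha a0 a1 n)%Z).
Proof.
  intros alpha.
  set (t0 := atan (Q2R u0)) in *. set (t1 := atan (Q2R u1)) in *.
  assert (Ht1 : 0 < t1) by (rewrite <- atan_0; apply atan_increasing; exact Hu1).
  assert (Ht01 : t1 < t0) by (apply atan_increasing; exact Hu01).
  assert (Halpha : 1 < alpha) by (apply Rlt_div_r; lra).
  assert (Hirr' : forall N D : Z, (0 < D)%Z -> alpha <> IZR N / IZR D).
  { intros N D HD E. apply (Hirr (Qmake N (Z.to_pos D))).
    fold alpha. rewrite E. unfold Q2R; simpl. rewrite Z2Pos.id by exact HD. reflexivity. }
  assert (Hlim : IZR a0 * alpha + IZR a1 = PI / 4 / t1)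
    by (rewrite <- Hrel; unfold alpha; field; lra).
  split.
  - rewrite <- Hlim. exact (a_neg_div_Dn_cvg alpha Halpha Hirr' a0 a1).
  - apply (a_neg_eventually_pos alpha Halpha Hirr').
    rewrite Hlim. apply Rdiv_lt_0_compat; [pose proof PI_RGT_0 |]; lra.
Qed.
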